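(* For every $N\ge 1$, the only right Markov code for the one-sided full $N$-shift $(X_{[N]},\sigma_{[N]})$ over $\Sigma_{[N]}=\{1,\dots,N\}$ is the trivial right Markov code $\Sigma_{[N]}$ (the set of all words of length $1$).
   Context: For an $N\times N$ matrix $A$ with entries in $\{0,1\}$, $\Sigma_A=\{1,\dots,N\}$, $X_A$ is the set of sequences $(x_n)_{n\in\mathbb{N}}$ in $\Sigma_A$ with $A(x_n,x_{n+1})=1$ for all $n$, with shift $\sigma_A$; the full $N$-shift is the case where all entries of $A$ equal $1$. $B_k(X_A)$ is the set of admissible words of length $k$, $B_*(X_A)$ the union over $k\ge0$ (including the empty word). For a word $w=w_1\cdots w_\ell$, $\sigma_A(w)=w_2\cdots w_\ell$. A code is a nonempty $\mathcal{C}\subset B_*(X_A)$ such that any equality of concatenations $\omega(i_1)\cdots\omega(i_k)=\omega(j_1)\cdots\omega(j_n)$ of words of $\mathcal{C}$ forces $n=k$ and $\omega(i_m)=\omega(j_m)$ for all $m$; a prefix code is a code in which no word is a prefix of another. A finite prefix code $\mathcal{C}=\{\omega(1),\dots,\omega(M)\}\subset B_*(X_A)$, $\Sigma_{A(\mathcal{C})}=\{1,\dots,M\}$, is a right Markov code for $(X_A,\sigma_A)$ if: (i) for every $\gamma\in B_*(X_A)$ there is $\eta\in B_*(X_A)$ with $\gamma\eta\in B_*(X_A)$ and a unique finite sequence $(i_1,\dots,i_k)$ in $\Sigma_{A(\mathcal{C})}$ with $\gamma\eta=\omega(i_1)\cdots\omega(i_k)$; (ii) there is $L\in\mathbb{N}$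 such that for all $i_1,\dots,i_L$ with $\omega(i_1)\cdots\omega(i_L)\in B_*(X_A)$ there exist $j_1,\dots,j_k\in\Sigma_{A(\mathcal{C})}$ with $\sigma_A(\omega(i_1))\omega(i_2)\cdots\omega(i_L)=\omega(j_1)\cdots\omega(j_k)$; (iii) for every $i,j$ there are $n_1,\dots,n_l$ with $\omega(i)\omega(n_1)\cdots\omega(n_l)\omega(j)\in B_*(X_A)$. *)

From mathcomp Require Import all_boot.
Set Implicit Arguments. Unset Strict Implicit. Unset Printing Implicit Defensive.

(* Alphabet Sigma_A = 'I_N (relabelling of {1,...,N}); transition matrix
   A with {0,1} entries is represented as a boolean relation on 'I_N. *)

Definition in_XA (N : nat) (A : rel 'I_N) (x : nat -> 'I_N) : Prop :=
  forall n, A (x n) (x n.+1).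

Definition admissible (N : nat) (A : rel 'I_N) (w : seq 'I_N) : Prop :=
  exists x, in_XA A x /\ exists i, w = [seq x (i + k) | k <- iota 0 (size w)].

Definition full_rel (N : nat) : rel 'I_N := fun _ _ => true.

(* A finite set of words is given as a duplicate-free list C; omega(i) is
   the i-th entry. A finite sequence of indices (i_1..i_k) is identified with
   the list of code words [omega(i_1); ...; omega(i_k)] (omega is injective). *)
Definition in_code (N : nat) (C : seq (seq 'I_N)) (s : seq (seq 'I_N)) : bool :=
  all (fun w => w \in C) s.

Definition is_code (N : nat) (A : rel 'I_N) (C : seq (seq 'I_N)) : Prop :=
  C != [::] /\ (forall w, w \in C -> admissible A w) /\
  forall s t, in_code C s -> in_code C t -> flatten s = flatten t -> s = t.

Definition is_prefix_code (N : nat) (A : rel 'I_N) (C : seq (seq 'I_N)) : Prop :=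
  is_code A C /\ forall u v, u \in C -> v \in C -> u != v -> ~~ prefix u v.

Definition right_Markov_code (N : nat) (A : rel 'I_N) (C : seq (seq 'I_N)) : Prop :=
  uniq C /\ is_prefix_code A C /\
  (forall g, admissible A g -> exists eta, admissible A (g ++ eta) /\
      exists! s, in_code C s /\ g ++ eta = flatten s) /\
  (exists L, 0 < L /\ forall s, size s = L -> in_code C s ->
      admissible A (flatten s) ->
      exists t, in_code C t /\
        behead (head [::] s) ++ flatten (behead s) = flatten t) /\
  (forall u v, u \in C -> v \in C -> exists s, in_code C s /\
      admissible A (u ++ flatten s ++ v)).

From mathcomp Require Import all_boot.

Set Implicit Arguments.
Unset Strict Implicit.
Unset Printing Implicit Defensive.

(* A right Markov code contains no empty word, and parsing a long power a^M
   of a letter (condition (i)) shows that some power a^k is a code word; by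
   prefix-freeness it is the only code word over the letter a.  Condition
   (ii) applied to (a^k)^L re-parses a^(kL-1) into code words, necessarily
   copies of a^k, so k divides kL - 1 and k = 1.  Once every letter is a code
   word, prefix-freeness leaves no room for longer words. *)

Lemma admissible_full (N : nat) (a : 'I_N) (w : seq 'I_N) :
  admissible (@full_rel N) w.
Proof.
exists (nth a w); split=> //.
by exists 0; rewrite -[LHS](mkseq_nth a).
Qed.

Lemma code_nil_notin (N : nat) (A : rel 'I_N) (C : seq (seq 'I_N)) :
  is_code A C -> [::] \notin C.
Proof.
case=> _ [_ uniq_parse]; apply/negP=> nilC.
by have := uniq_parse [:: [::]] [::]; rewrite /in_code /= nilC => /(_ isT isT erefl).
Qed.

Lemma all_flatten (T : Type) (p : pred T) (ss : seq (seq T)) :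
  all p (flatten ss) = all (all p) ss.
Proof. by elim: ss => //= s ss IHss; rewrite all_cat IHss. Qed.

Lemma size_flatten_nseq (T : Type) (m : nat) (s : seq T) :
  size (flatten (nseq m s)) = size s * m.
Proof. by rewrite size_flatten /shape map_nseq sumn_nseq. Qed.

Lemma nseq_prefix (T : eqType) (a : T) (i j : nat) :
  i <= j -> prefix (nseq i a) (nseq j a).
Proof. by move=> le_ij; rewrite -(subnKC le_ij) nseqD prefix_prefix. Qed.

Lemma cat_nseq_prefix (T : Type) (a : T) (M : nat) (u r eta : seq T) :
  size u <= M -> u ++ r = nseq M a ++ eta -> u = nseq (size u) a.
Proof.
move=> le_uM eq_ur.
have -> : u = take (size u) (nseq M a ++ eta) by rewrite -eq_ur take_size_cat.
by rewrite takel_cat ?take_nseq ?size_nseq.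
Qed.

Lemma pred_add_mul_eq1 (k n m : nat) : 0 < k -> k.-1 + k * n = k * m -> k = 1.
Proof.
move=> k_gt0 /(congr1 (modn^~ k)).
rewrite addnC ![k * _]mulnC modnMDl modnMl modn_small ?prednK //.
by move: k_gt0; case: k => [|[]].
Qed.

Section PrefixFree.

Variables (T : eqType) (C : seq (seq T)).
Hypothesis prefix_freeC : forall u v, u \in C -> v \in C -> u != v -> ~~ prefix u v.

Lemma prefix_free_nseq_eq (a : T) (i j : nat) :
  nseq i a \in C -> nseq j a \in C -> nseq i a = nseq j a.
Proof.
wlog le_ij : i j / i <= j => [hwlog iC jC|iC jC].
  case: (leqP i j) => [le_ij | /ltnW le_ji]; first exact: hwlog.
  by rewrite (hwlog j i).
apply/eqP; apply: contraT => neq_ij.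
by have := prefix_freeC iC jC neq_ij; rewrite nseq_prefix.
Qed.

Lemma prefix_free_letters (w : seq T) :
  [::] \notin C -> (forall a, [:: a] \in C) -> w \in C -> size w = 1.
Proof.
move=> nilC letterC wC; case: w wC => [|b [|c w]] wC //; first by rewrite wC in nilC.
have neq_bw : [:: b] != [:: b, c & w] by rewrite eqseq_cons andbF.
by have := prefix_freeC (letterC b) wC neq_bw; rewrite /= eqxx.
Qed.

End PrefixFree.

Section FullShiftMarkovCode.

Variables (N : nat) (C : seq (seq 'I_N)).
Hypothesis markovC : right_Markov_code (@full_rel N) C.

Lemma markov_nil_notin : [::] \notin C.
Proof. by case: markovC => _ [[codeC _] _]; apply: code_nil_notin codeC. Qed.

Lemma markov_prefix_free u v : u \in C -> v \in C -> u != v -> ~~ prefix u v.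
Proof. by case: markovC => _ [[_ prefC] _]; apply: prefC. Qed.

Lemma markov_letter_power (a : 'I_N) : exists k, nseq k a \in C.
Proof.
case: markovC => _ [_ [parse _]].
set M := (\max_(v <- C) size v).+1.
have [eta [_ [[|u s] [[//= sC eq_s] _]]]] := parse (nseq M a) (admissible_full a _).
case/andP: sC => uC _; exists (size u).
have le_uM : size u <= M := leqW (leq_bigmax_seq _ uC isT).
by rewrite -(cat_nseq_prefix le_uM (esym eq_s)).
Qed.

Lemma markov_letter_power_eq1 (a : 'I_N) (k : nat) : nseq k a \in C -> k = 1.
Proof.
move=> kC; have k_gt0 : 0 < k.
  by case: k kC => // nilC; have := markov_nil_notin; rewrite nilC.
case: markovC => _ [_ [_ [[[|L] [// _ reparse]] _]]].
have powC : in_code C (nseq L.+1 (nseq k a)) by rewrite /in_code all_nseq kC orbT.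
have [t [tC /= eq_t]] := reparse _ (size_nseq _ _) powC (admissible_full a _).
have behead_pow : behead (nseq k a) = nseq k.-1 a by case: (k).
have all_a : all (pred1 a) (flatten t).
  rewrite -eq_t behead_pow all_cat all_flatten all_pred1_nseq.
  by rewrite all_nseq all_pred1_nseq orbT.
have t_pow : t = nseq (size t) (nseq k a).
  apply/all_pred1P/allP=> v vt /=; move: all_a; rewrite all_flatten.
  move=> /allP/(_ v vt)/all_pred1P v_a; apply/eqP; rewrite v_a.
  by apply: (prefix_free_nseq_eq (@markov_prefix_free)) kC; rewrite -v_a (allP tC).
move: eq_t; rewrite t_pow => /(congr1 size).
rewrite size_cat !size_flatten_nseq size_behead !size_nseq.
exact: pred_add_mul_eq1.
Qed.

Lemma markov_letter_in_code (a : 'I_N) : [:: a] \in C.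
Proof.
have [k kC] := markov_letter_power a.
by move: (kC); rewrite (markov_letter_power_eq1 kC).
Qed.

End FullShiftMarkovCode.

Theorem mainTheorem3 (N : nat) (C : seq (seq 'I_N)) :
  1 <= N -> right_Markov_code (@full_rel N) C ->
  forall w : seq 'I_N, w \in C <-> size w = 1.
Proof.
move=> _ markovC w; split.
  apply: prefix_free_letters (markov_nil_notin markovC) (markov_letter_in_code markovC).
  exact: markov_prefix_free.
by case: w => [|b []] // _; apply: markov_letter_in_code.
Qed.
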